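(* Let $X,Y$ be compact metric spaces, $\epsilon\ge0$, and $X_\epsilon,Y_\epsilon$ finite $\epsilon$-nets of $X$ and $Y$ respectively. Let $n=\min\{|X_\epsilon|,|Y_\epsilon|\}$. Then $d_{\mathrm{GH}}(X,Y)\le(2n-1)\widehat{d}_{\mathrm{GH}}(X,Y)+2n\epsilon$.
   Context: An $\epsilon$-net of $X$ is a subset such that every point of $X$ is within distance $\le\epsilon$ of it. For $f:X\to Y$, $\operatorname{dis}(f)=\sup_{x,x'}|d_X(x,x')-d_Y(f(x),f(x'))|$; $\operatorname{codis}(f,g)=\sup_{x,y}|d_X(x,g(y))-d_Y(f(x),y)|$. $d_{\mathrm{GH}}$ is the Gromov--Hausdorff distance, equal to $\frac12\inf_{f,g}\max\{\operatorname{dis}(f),\operatorname{dis}(g),\operatorname{codis}(f,g)\}$; $\widehat{d}_{\mathrm{GH}}(X,Y)=\frac12\max\{\inf_{f:X\to Y}\operatorname{dis}(f),\inf_{g:Y\to X}\operatorname{dis}(g)\}$. *)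

From Stdlib Require List.
From mathcomp Require Import all_boot all_order all_algebra.
From mathcomp Require Import all_classical all_reals all_analysis.
Set Implicit Arguments. Unset Strict Implicit. Unset Printing Implicit Defensive.
Import Order.TTheory GRing.Theory Num.Theory.
Local Open Scope classical_set_scope.
Local Open Scope ring_scope.

Definition is_metric (R : realType) (T : Type) (d : T -> T -> R) : Prop :=
  (forall x y, 0 <= d x y) /\
  (forall x y, d x y = 0 <-> x = y) /\
  (forall x y, d x y = d y x) /\
  (forall x y z, d x z <= d x y + d y z).

(* (T,d) is compact: every sequence has a convergent subsequence
   (equivalent to compactness for metric spaces). *)
Definition metric_compact (R : realType) (T : Type) (d : T -> T -> R) : Prop :=
  forall u : nat -> T, exists (phi : nat -> nat) (l : T),
    (forall m n, (m < n)%N -> (phi m < phi n)%N) /\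
    (forall e : R, 0 < e -> exists N, forall k, (N <= k)%N -> d (u (phi k)) l < e).

Definition is_eps_net (R : realType) (T : Type) (d : T -> T -> R) (eps : R)
  (s : seq T) : Prop :=
  forall x : T, exists a, List.In a s /\ d x a <= eps.

Local Open Scope ereal_scope.

Definition dis (R : realType) (X Y : Type) (dX : X -> X -> R) (dY : Y -> Y -> R)
  (f : X -> Y) : \bar R :=
  ereal_sup (range (fun p : X * X => (`| dX p.1 p.2 - dY (f p.1) (f p.2) |)%:E)).

Definition codis (R : realType) (X Y : Type) (dX : X -> X -> R) (dY : Y -> Y -> R)
  (f : X -> Y) (g : Y -> X) : \bar R :=
  ereal_sup (range (fun p : X * Y => (`| dX p.1 (g p.2) - dY (f p.1) p.2 |)%:E)).

Definition dGH (R : realType) (X Y : Type) (dX : X -> X -> R) (dY : Y -> Y -> R)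
  : \bar R :=
  (2^-1)%:E * ereal_inf (range (fun fg : (X -> Y) * (Y -> X) =>
     maxe (maxe (dis dX dY fg.1) (dis dY dX fg.2)) (codis dX dY fg.1 fg.2))).

Definition dGH_hat (R : realType) (X Y : Type) (dX : X -> X -> R) (dY : Y -> Y -> R)
  : \bar R :=
  (2^-1)%:E * maxe (ereal_inf (range (fun f : X -> Y => dis dX dY f)))
                   (ereal_inf (range (fun g : Y -> X => dis dY dX g))).

From Stdlib Require List.
From mathcomp Require Import all_boot all_order all_algebra.
From mathcomp Require Import all_classical all_reals all_analysis.
From mathcomp Require Import zify ring lra.
Set Implicit Arguments. Unset Strict Implicit. Unset Printing Implicit Defensive.
Import Order.TTheory GRing.Theory Num.Theory.

(* Take f : X -> Y and g : Y -> X of nearly optimal distortion and the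
   nearest-point map pr onto the smaller net, say Y_eps with n points.  The map
   psi = pr \o f \o g sends Y_eps into itself and changes distances by at most
   delta = dis f + dis g + 2 eps, and every psi-orbit in Y_eps is rho-shaped,
   with a tail i and a period p such that i + p <= n.  Put
   G y = g (psi^(p-1) (pr y)), so that pr (f (G y)) = psi^p (pr y).  As
   psi^i (psi^p z) = psi^i z, moving z to psi^p z costs at most i * delta; for
   two points, either their orbits meet and have the same period p <= n - 1
   (or both are cycles of length n), or the orbits are disjoint and the tails
   add up to at most n - 2.  Hence (pr \o f, G) has distortions and
   codistortion at most dis f + 4 eps + (n - 1) delta, which yields
   d_GH <= (2n - 1) \hat d_GH + (n + 1) eps. *)

Lemma size_length (T : Type) (s : seq T) : size s = length s.
Proof. by elim: s => //= _ s ->. Qed.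

Lemma leq_size_inj (T : Type) (s : seq T) (u : nat -> T) (m : nat) :
  (forall k, k < m -> List.In (u k) s) ->
  (forall k l, k < l < m -> u k <> u l) -> m <= size s.
Proof.
move=> u_s u_inj; rewrite size_length -[m in m <= _](List.length_seq m 0).
rewrite -(List.length_map u).
apply/ssrnat.leP/List.NoDup_incl_length.
  apply: List.NoDup_map_NoDup_ForallPairs (List.seq_NoDup _ _).
  move=> k l /List.in_seq[_ /ssrnat.ltP km] /List.in_seq[_ /ssrnat.ltP lm] ukl.
  by case: (ltngtP k l) => // [kl | lk]; [case: (u_inj k l) | case: (u_inj l k)];
    rewrite ?kl ?lk.
by move=> _ /List.in_map_iff[k [<- /List.in_seq[_ /ssrnat.ltP km]]]; apply: u_s.
Qed.

Section RhoOrbit.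
Variables (T : Type) (psi : T -> T).

Definition rho_orbit (z : T) (i p : nat) :=
  [/\ 0 < p, iter (i + p) psi z = iter i psi z &
      forall a b, a < b < i + p -> iter a psi z <> iter b psi z].

Section Periodicity.
Variables (z : T) (i p : nat).
Hypothesis rho : rho_orbit z i p.

Lemma rho_orbit_iterD c : i <= c -> iter (c + p) psi z = iter c psi z.
Proof.
case: rho => _ eip _ ic.
by rewrite -(subnK ic) -addnA iterD eip -iterD.
Qed.

Lemma rho_orbit_iterM r t : iter (i + r + t * p) psi z = iter (i + r) psi z.
Proof.
elim: t => [|t IH]; first by rewrite addn0.
by rewrite mulSn (addnC p) addnA rho_orbit_iterD ?IH // -addnA leq_addr.
Qed.

Lemma rho_orbit_period_min c q : 0 < q -> iter (c + q) psi z = iter c psi z -> p <= q.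
Proof.
case: (rho) => p_gt0 _ distinct q_gt0 ecq; rewrite leqNgt; apply/negP => qp.
have c_le : c <= i + c * p by apply: leq_trans (leq_addl i _); rewrite leq_pmulr.
have shift : iter (i + c * p + q) psi z = iter (i + c * p) psi z.
  by rewrite -(subnK c_le) -addnA !(iterD (_ - c)) ecq.
apply: (distinct i (i + q)); first lia.
rewrite -[in LHS](addn0 i) -(rho_orbit_iterM 0 c) addn0 -shift.
by rewrite -addnA (addnC _ q) addnA rho_orbit_iterM.
Qed.

End Periodicity.

Lemma rho_orbit_period_le z z' i p i' p' a b :
  rho_orbit z i p -> rho_orbit z' i' p' -> iter a psi z = iter b psi z' -> p <= p'.
Proof.
move=> rz rz' eab; case: (rz') => p'_gt0 _ _.
have shift k : iter (k + a) psi z = iter (k + b) psi z' by rewrite !iterD eab.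
apply: (rho_orbit_period_min rz (c := i' + a)) p'_gt0 _.
by rewrite addnAC !shift addnAC (rho_orbit_iterD rz') // leq_addr.
Qed.

Section StableSeq.
Variable s : seq T.
Hypothesis psi_s : forall x, List.In x s -> List.In (psi x) s.

Lemma In_iter k w : List.In w s -> List.In (iter k psi w) s.
Proof. by move=> ws; elim: k => //= k; apply: psi_s. Qed.

Lemma rho_orbit_exists z : List.In z s -> exists i p, rho_orbit z i p /\ i + p <= size s.
Proof.
move=> zs; have iter_s k := In_iter k zs.
pose repeats j := `[< exists2 i, i < j & iter i psi z = iter j psi z >].
have ex_repeat : exists j, repeats j.
  apply: contrapT => no_repeat.
  suff : (size s).+1 <= size s by rewrite ltnn.
  apply: (leq_size_inj (fun k _ => iter_s k)) => k l /andP[kl _] ekl.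
  by apply: no_repeat; exists l; apply/asboolP; exists k.
case: (ex_minnP ex_repeat) => j /asboolP[i ij eij] j_min.
have distinct a b : a < b < j -> iter a psi z <> iter b psi z.
  move=> /andP[ab bj] eab.
  suff /j_min : repeats b by rewrite leqNgt bj.
  by apply/asboolP; exists a.
exists i, (j - i); rewrite /rho_orbit subnKC ?(ltnW ij) // subn_gt0.
by split; [split | exact: leq_size_inj (fun k _ => iter_s k) distinct].
Qed.

Lemma rho_orbit_pair z z' i p i' p' :
  List.In z s -> List.In z' s -> rho_orbit z i p -> rho_orbit z' i' p' ->
  i + p <= size s -> i' + p' <= size s ->
  [\/ i + i' + 2 <= size s, p = p' /\ p < size s | i = 0 /\ i' = 0].
Proof.
move=> zs z's rz rz' ip_le i'p'_le.
case: (pselect (exists a b, [/\ a < i + p, b < i' + p' & iter a psi z = iter b psi z'])).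
  move=> [a [b [_ _ eab]]].
  have pp' : p = p'.
    by apply/eqP; rewrite eqn_leq (rho_orbit_period_le rz rz' eab)
                          (rho_orbit_period_le rz' rz (esym eab)).
  by case: (ltnP p (size s)) => ps; [apply: Or32 | apply: Or33]; lia.
move=> disjoint; apply: Or31.
case: rz rz' => p_gt0 _ dz [p'_gt0 _ dz'].
pose u k := if k < i + p then iter k psi z else iter (k - (i + p)) psi z'.
suff : i + p + (i' + p') <= size s by lia.
apply: (@leq_size_inj _ s u) => [k _ | k l /andP[kl lm]].
  by rewrite /u; case: ifP => _; apply: In_iter.
rewrite /u; case: ifP => kip; case: ifP => lip.
- by apply: dz; rewrite kl.
- by move=> ekl; apply: disjoint; exists k, (l - (i + p)); split => //; lia.
- lia.
- by apply: dz'; lia.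
Qed.

End StableSeq.

End RhoOrbit.

Local Open Scope ring_scope.

Section MetricFacts.
Variables (R : realType) (T : Type) (d : T -> T -> R).
Hypothesis d_metric : is_metric d.

Lemma metric_dist0 x : d x x = 0.
Proof. by case: d_metric => _ [/(_ x x)[_ ->]]. Qed.

Lemma metric_distC x y : d x y = d y x.
Proof. by case: d_metric => _ [_ []]. Qed.

Lemma metric_triangle x y z : d x z <= d x y + d y z.
Proof. by case: d_metric => _ [_ []]. Qed.

Lemma metric_dist_diff_le a b a' b' : `|d a b - d a' b'| <= d a a' + d b b'.
Proof.
have := metric_triangle a a' b; have := metric_triangle a' b' b.
have := metric_triangle a' a b'; have := metric_triangle a b b'.
rewrite ler_norml (metric_distC b' b) (metric_distC a' a) => *; apply/andP; split; lra.
Qed.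

End MetricFacts.

Section DistortionBounds.
Variable R : realType.

Definition dis_bounded (X Y : Type) (dX : X -> X -> R) (dY : Y -> Y -> R)
    (f : X -> Y) (K : R) :=
  forall x x', `|dX x x' - dY (f x) (f x')| <= K.

Definition codis_bounded (X Y : Type) (dX : X -> X -> R) (dY : Y -> Y -> R)
    (f : X -> Y) (g : Y -> X) (K : R) :=
  forall x y, `|dX x (g y) - dY (f x) y| <= K.

Variables (X Y Z : Type) (dX : X -> X -> R) (dY : Y -> Y -> R) (dZ : Z -> Z -> R).

Lemma dis_boundedP (f : X -> Y) K : dis_bounded dX dY f K <-> (dis dX dY f <= K%:E)%E.
Proof.
split=> [f_bd | dis_le x x'].
  by apply: ge_ereal_sup => _ [[x x'] _ <-]; rewrite lee_fin.
by rewrite -lee_fin; apply: le_trans dis_le; apply: ereal_sup_ubound; exists (x, x').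
Qed.

Lemma codis_boundedP (f : X -> Y) g K :
  codis_bounded dX dY f g K <-> (codis dX dY f g <= K%:E)%E.
Proof.
split=> [fg_bd | codis_le x y].
  by apply: ge_ereal_sup => _ [[x y] _ <-]; rewrite lee_fin.
by rewrite -lee_fin; apply: le_trans codis_le; apply: ereal_sup_ubound; exists (x, y).
Qed.

Lemma dis_bounded_ge0 (f : X -> Y) K : is_metric dX -> is_metric dY ->
  dis_bounded dX dY f K -> X -> 0 <= K.
Proof. by move=> mX mY f_bd x; have := f_bd x x; rewrite !metric_dist0 // subrr normr0. Qed.

Lemma dis_bounded_comp (f : X -> Y) (g : Y -> Z) A B :
  dis_bounded dX dY f A -> dis_bounded dY dZ g B -> dis_bounded dX dZ (g \o f) (A + B).
Proof.
by move=> f_bd g_bd x x'; apply: le_trans (ler_distD (dY (f x) (f x')) _ _) _; apply: lerD.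
Qed.

Lemma codis_bounded_sym (f : X -> Y) g K : is_metric dX -> is_metric dY ->
  codis_bounded dX dY f g K -> codis_bounded dY dX g f K.
Proof.
by move=> mX mY fg_bd y x; rewrite (metric_distC mY) (metric_distC mX) -normrN opprB.
Qed.

End DistortionBounds.

Lemma dis_bounded_iter (R : realType) (T : Type) (d : T -> T -> R) psi delta k :
  dis_bounded d d psi delta -> dis_bounded d d (iter k psi) (k%:R * delta).
Proof.
move=> psi_bd; elim: k => [|k IH] x x' /=; first by rewrite subrr normr0 mul0r.
apply: le_trans (ler_distD (d (iter k psi x) (iter k psi x')) _ _) _.
by rewrite mulrSr mulrDl mul1r lerD.
Qed.

Lemma dis_bounded_net_proj (R : realType) (T : Type) (d : T -> T -> R) pr eps :
  is_metric d -> (forall y, d y (pr y) <= eps) -> dis_bounded d d pr (2 * eps).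
Proof.
move=> d_metric pr_eps y y'; apply: le_trans (metric_dist_diff_le d_metric _ _ _ _) _.
by rewrite mulr2n mulrDl mul1r lerD.
Qed.

Section ReturnTimes.
Variables (R : realType) (T : Type) (d : T -> T -> R) (psi : T -> T) (delta : R).
Hypotheses (d_metric : is_metric d) (psi_bd : dis_bounded d d psi delta).

Lemma rho_orbit_dist_return z i p :
  rho_orbit psi z i p -> d z (iter p psi z) <= i%:R * delta.
Proof.
case=> _ eip _; have := dis_bounded_iter i psi_bd z (iter p psi z).
by rewrite -iterD eip metric_dist0 // subr0; apply: le_trans (ler_norm _).
Qed.

Lemma exists_return_times (s : seq T) :
  (forall x, List.In x s -> List.In (psi x) s) ->
  exists k : T -> nat, [/\ forall z, List.In z s -> (0 < k z)%N,
    forall z, List.In z s -> d z (iter (k z) psi z) <= (size s).-1%:R * delta &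
    forall z z', List.In z s -> List.In z' s ->
      `|d z z' - d (iter (k z) psi z) (iter (k z') psi z')| <= (size s).-1%:R * delta].
Proof.
move=> psi_s.
have shape_ex z : exists ip : nat * nat,
    List.In z s -> rho_orbit psi z ip.1 ip.2 /\ (ip.1 + ip.2 <= size s)%N.
  case: (pselect (List.In z s)) => [zs | zNs]; last by exists (0, 0).
  by have [i [p ?]] := rho_orbit_exists psi_s zs; exists (i, p).
have [ip shape] := choice shape_ex.
have scale z k : List.In z s -> (k <= (size s).-1)%N ->
    k%:R * delta <= (size s).-1%:R * delta.
  move=> zs k_le; rewrite ler_wpM2r ?ler_nat //.
  exact: dis_bounded_ge0 d_metric d_metric psi_bd z.
have tail_le z : List.In z s -> ((ip z).1 <= (size s).-1)%N.
  by move=> /shape[[p_gt0 _ _] ip_le]; lia.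
exists (fun z => (ip z).2); split => [z /shape[[] //] | z zs | z z' zs z's].
  by apply: le_trans (rho_orbit_dist_return (shape z zs).1) (scale z _ zs (tail_le z zs)).
have [rz ip_le] := shape z zs; have [rz' ip'_le] := shape z' z's.
case: (rho_orbit_pair psi_s zs z's rz rz' ip_le ip'_le)
  => [tails_le | [pp' p_lt] | [i0 i'0]].
- apply: le_trans (metric_dist_diff_le d_metric _ _ _ _) _.
  apply: le_trans (lerD (rho_orbit_dist_return rz) (rho_orbit_dist_return rz')) _.
  by rewrite -mulrDl -natrD (scale z) //; lia.
- by rewrite -pp'; apply: le_trans (dis_bounded_iter _ psi_bd z z') (scale z _ zs _); lia.
- case: rz rz' => _ + _ [_ + _]; rewrite i0 i'0 => -> ->.
  by rewrite subrr normr0 mulr_ge0 // (dis_bounded_ge0 d_metric d_metric psi_bd z).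
Qed.

End ReturnTimes.

Lemma net_correspondence (R : realType) (X Y : Type) (dX : X -> X -> R)
    (dY : Y -> Y -> R) (y0 : Y) eps (sY : seq Y) (f : X -> Y) (g : Y -> X) A B K :
  is_metric dY -> 0 <= eps -> is_eps_net dY eps sY ->
  dis_bounded dX dY f A -> dis_bounded dY dX g B ->
  A + 4 * eps + (size sY).-1%:R * (A + B + 2 * eps) <= K ->
  exists F G,
    [/\ dis_bounded dX dY F K, dis_bounded dY dX G K & codis_bounded dX dY F G K].
Proof.
move=> mY eps_ge0 net f_bd g_bd; set delta := A + B + 2 * eps => K_ge.
have [pr pr_spec] := choice net.
have pr_s y : List.In (pr y) sY by case: (pr_spec y).
have pr_eps y : dY y (pr y) <= eps by case: (pr_spec y).
have pr_bd := dis_bounded_net_proj mY pr_eps.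
have F_bd : dis_bounded dX dY (pr \o f) (A + 2 * eps) := dis_bounded_comp f_bd pr_bd.
pose psi := pr \o f \o g.
have psi_bd : dis_bounded dY dY psi delta.
  by move=> u v; apply: le_trans (dis_bounded_comp g_bd F_bd u v) _; rewrite /delta; lra.
have [k [k_gt0 k_dist k_pair]] :=
  exists_return_times mY psi_bd (fun y _ => pr_s (f (g y))).
pose G y := g (iter (k (pr y)).-1 psi (pr y)).
have FG y : pr (f (G y)) = iter (k (pr y)) psi (pr y).
  by rewrite -[in RHS](prednK (k_gt0 _ (pr_s y))) iterS.
have err_ge0 : 0 <= (size sY).-1%:R * delta.
  by rewrite mulr_ge0 // (dis_bounded_ge0 mY mY psi_bd y0).
exists (pr \o f), G; split => [x x' | y y' | x y].
- by apply: le_trans (F_bd x x') _; lra.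
- have FG_yy' := F_bd (G y) (G y'); rewrite /= !FG distrC in FG_yy'.
  have ret_yy' := k_pair _ _ (pr_s y) (pr_s y').
  apply: le_trans (ler_distD (dY (pr y) (pr y')) _ _) _.
  apply: le_trans (lerD (pr_bd y y') (ler_distD (dY (iter (k (pr y)) psi (pr y))
                                          (iter (k (pr y')) psi (pr y'))) _ _)) _.
  by lra.
- set w := iter (k (pr y)) psi (pr y).
  have FG_xy := F_bd x (G y); rewrite /= FG in FG_xy.
  have w_y := metric_dist_diff_le mY (pr (f x)) w (pr (f x)) y.
  rewrite metric_dist0 // add0r in w_y.
  have w_pry_y := metric_triangle mY w (pr y) y.
  have y_pry := pr_eps y; rewrite metric_distC // in y_pry.
  have pry_w := k_dist _ (pr_s y); rewrite metric_distC // in pry_w.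
  apply: le_trans (ler_distD (dY (pr (f x)) w) _ _) _.
  by lra.
Qed.

Lemma eps_net_size_gt0 (R : realType) (T : Type) (d : T -> T -> R) eps (s : seq T) :
  T -> is_eps_net d eps s -> (0 < size s)%N.
Proof. by move=> t /(_ t)[w [+ _]]; case: s. Qed.

Lemma min_net_correspondence (R : realType) (X Y : Type) (dX : X -> X -> R)
    (dY : Y -> Y -> R) (x0 : X) (y0 : Y) eps (sX : seq X) (sY : seq Y)
    (f : X -> Y) (g : Y -> X) M K :
  is_metric dX -> is_metric dY -> 0 <= eps ->
  is_eps_net dX eps sX -> is_eps_net dY eps sY ->
  dis_bounded dX dY f M -> dis_bounded dY dX g M ->
  let n := minn (size sX) (size sY) in
  (2 * n%:R - 1) * M + (2 * n%:R + 2) * eps <= K ->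
  exists F G,
    [/\ dis_bounded dX dY F K, dis_bounded dY dX G K & codis_bounded dX dY F G K].
Proof.
move=> mX mY eps_ge0 netX netY f_bd g_bd n K_ge.
have n_gt0 : (0 < n)%N.
  by rewrite leq_min (eps_net_size_gt0 x0 netX) (eps_net_size_gt0 y0 netY).
have err_le m : m = n -> M + 4 * eps + m.-1%:R * (M + M + 2 * eps) <= K.
  move=> ->; apply: le_trans K_ge; rewrite -subn1 natrB //.
  by rewrite le_eqVlt; apply/orP; left; apply/eqP; ring.
case: (leqP (size sY) (size sX)) => sizes.
  exact: (net_correspondence y0 mY eps_ge0 netY f_bd g_bd
           (err_le _ (esym (elimT minn_idPr sizes)))).
have [G [F [G_bd F_bd GF_bd]]] := net_correspondence x0 mX eps_ge0 netX g_bd f_bd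
  (err_le _ (esym (elimT minn_idPl (ltnW sizes)))).
by exists F, G; split => //; apply: codis_bounded_sym.
Qed.

Section DisInf.
Variables (R : realType) (X Y : Type) (dX : X -> X -> R) (dY : Y -> Y -> R).
Local Open Scope ereal_scope.

Lemma dis_inf_ge0 (x0 : X) : 0 <= ereal_inf (range (dis dX dY)).
Proof.
apply: le_ereal_inf_tmp => _ [f _ <-]; apply: le_ereal_sup_tmp.
by exists `|dX x0 x0 - dY (f x0) (f x0)|%:E; [exists (x0, x0) |].
Qed.

Lemma exists_dis_bounded (m e : R) : (0 < e)%R ->
  ereal_inf (range (dis dX dY)) <= m%:E -> exists f, dis_bounded dX dY f (m + e).
Proof.
move=> e_gt0 inf_le.
have /ereal_inf_lt[_ [f _ <-] f_lt] : ereal_inf (range (dis dX dY)) < (m + e)%:E.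
  by apply: le_lt_trans inf_le _; rewrite lte_fin ltrDl.
by exists f; apply/dis_boundedP/ltW.
Qed.

End DisInf.

Section GHBounds.
Variables (R : realType) (X Y : Type) (dX : X -> X -> R) (dY : Y -> Y -> R).
Local Open Scope ereal_scope.

Definition dGH_inf : \bar R :=
  ereal_inf (range (fun fg : (X -> Y) * (Y -> X) =>
     maxe (maxe (dis dX dY fg.1) (dis dY dX fg.2)) (codis dX dY fg.1 fg.2))).

Lemma dGH_inf_le (F : X -> Y) (G : Y -> X) (K : R) :
  dis_bounded dX dY F K -> dis_bounded dY dX G K -> codis_bounded dX dY F G K ->
  dGH_inf <= K%:E.
Proof.
move=> /dis_boundedP F_bd /dis_boundedP G_bd /codis_boundedP FG_bd.
by apply: ge_ereal_inf; exists (maxe (maxe (dis dX dY F) (dis dY dX G)) (codis dX dY F G));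
  [exists (F, G) | rewrite !ge_max F_bd G_bd FG_bd].
Qed.

Lemma dGH_inf_le_dis_inf (x0 : X) (y0 : Y) eps (sX : seq X) (sY : seq Y) (m : R) :
  is_metric dX -> is_metric dY -> (0 <= eps)%R ->
  is_eps_net dX eps sX -> is_eps_net dY eps sY ->
  ereal_inf (range (dis dX dY)) <= m%:E -> ereal_inf (range (dis dY dX)) <= m%:E ->
  dGH_inf <= ((2 * (minn (size sX) (size sY))%:R - 1) * m
              + (2 * (minn (size sX) (size sY))%:R + 2) * eps)%:E.
Proof.
move=> mX mY eps_ge0 netX netY a_le b_le; set n := minn _ _.
have n_gt0 : (0 < n)%N.
  by rewrite leq_min (eps_net_size_gt0 x0 netX) (eps_net_size_gt0 y0 netY).
have c_gt0 : (0 < 2 * n%:R - 1 :> R)%R.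
  by rewrite subr_gt0 -natrM (ltr1n R); lia.
apply/lee_addgt0Pr => e e_gt0; have eta_gt0 := divr_gt0 e_gt0 c_gt0.
have [f f_bd] := exists_dis_bounded eta_gt0 a_le.
have [g g_bd] := exists_dis_bounded eta_gt0 b_le.
have [F [G [F_bd G_bd FG_bd]]] :=
  min_net_correspondence x0 y0 mX mY eps_ge0 netX netY f_bd g_bd (lexx _).
apply: le_trans (dGH_inf_le F_bd G_bd FG_bd) _.
by rewrite -EFinD lee_fin mulrDr [(_ * (e / _))%R]mulrC divfK ?lt0r_neq0 // addrAC.
Qed.

End GHBounds.

Theorem mainTheorem8 (R : realType) (X Y : Type) (dX : X -> X -> R) (dY : Y -> Y -> R)
  (x0 : X) (y0 : Y)
  (hX : is_metric dX) (hY : is_metric dY)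
  (cX : metric_compact dX) (cY : metric_compact dY)
  (eps : R) (heps : 0 <= eps)
  (sX : seq X) (sY : seq Y)
  (uX : List.NoDup sX) (uY : List.NoDup sY)
  (nX : is_eps_net dX eps sX) (nY : is_eps_net dY eps sY) :
  let n := minn (size sX) (size sY) in
  (dGH dX dY <= ((2 * n - 1)%N%:R)%:E * dGH_hat dX dY + (2 * n%:R * eps)%:E)%E.
Proof.
cbv zeta; set n := minn _ _; rewrite /dGH /dGH_hat -/(dGH_inf dX dY).
have n_gt0 : (0 < n)%N by rewrite leq_min (eps_net_size_gt0 x0 nX) (eps_net_size_gt0 y0 nY).
case E : (maxe _ _) => [m | | ].
- move: (lexx m%:E); rewrite -{1}E ge_max => /andP[a_le b_le].
  have I_le := dGH_inf_le_dis_inf x0 y0 hX hY heps nX nY a_le b_le.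
  rewrite -!EFinM -EFinD; apply: le_trans (lee_wpmul2l _ I_le) _; first by rewrite lee_fin.
  rewrite -EFinM lee_fin -/n natrB ?natrM; last lia.
  have n_ge1 : 1 <= n%:R :> R by rewrite ler1n.
  nra.
- by rewrite !gt0_muley ?lte_fin ?invr_gt0 ?ltr0n // ?addye ?leey //; lia.
- have : (0 <= maxe (ereal_inf (range (dis dX dY))) (ereal_inf (range (dis dY dX))))%E.
    by rewrite le_max (dis_inf_ge0 _ _ x0).
  by rewrite E leeNy_eq.
Qed.
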